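(* Let $P=\varprojlim\langle\{P_n\},\{p^n_k\}_{k<n}\rangle$ and $H=\varprojlim\langle\{H_n\},\{h^n_k\}_{k<n}\rangle$ be profinite posets and $f:P\to H$ a continuous quotient map. Then there exist a strictly increasing sequence $(i_n)_{n\in\mathbb{N}}$ of natural numbers and quotient maps $g_j:P_{i_j}\to H_j$ such that $f(x_1,x_2,\dots)=(g_1(x_{i_1}),g_2(x_{i_2}),\dots)$ for all $(x_n)\in P$, and $g_k\circ p^{i_n}_{i_k}=h^n_k\circ g_n$ for all $k<n$.
   Context: A quotient map between posets is a surjective order-preserving map $\phi:A\to B$ such that for all $p\le r$ in $B$ there are $x\le y$ in $A$ with $\phi(x)=p,\phi(y)=r$. A profinite poset is an inverse limit $\{(x_n)\in\prod_n P_n:p^{n+1}_n(x_{n+1})=x_n\ \forall n\}$ of nonempty finite posets $P_n$ with quotient maps $p^m_k:P_m\to P_k$ ($k<m$) satisfying $p^k_l\circ p^m_k=p^m_l$, ordered coordinatewise and topologized as a subspace of the product of discrete spaces. *)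

From mathcomp Require Import all_boot.
Set Implicit Arguments. Unset Strict Implicit. Unset Printing Implicit Defensive.

Definition is_poset (A : Type) (le : A -> A -> Prop) : Prop :=
  (forall x, le x x) /\
  (forall x y, le x y -> le y x -> x = y) /\
  (forall x y z, le x y -> le y z -> le x z).

Definition quotient_map (A B : Type) (leA : A -> A -> Prop) (leB : B -> B -> Prop)
  (phi : A -> B) : Prop :=
  (forall b, exists a, phi a = b) /\
  (forall x y, leA x y -> leB (phi x) (phi y)) /\
  (forall b1 b2, leB b1 b2 ->
     exists x y, leA x y /\ phi x = b1 /\ phi y = b2).

(* Inverse system of nonempty finite posets T n with bonding maps p m k : T m -> T k
   (only meaningful for k < m); indices start at 0. *)
Definition inverse_system (T : nat -> finType) (le : forall n, T n -> T n -> Prop)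
  (p : forall m k, T m -> T k) : Prop :=
  (forall n, is_poset (@le n)) /\
  (forall n, inhabited (T n)) /\
  (forall k m, k < m -> quotient_map (@le m) (@le k) (p m k)) /\
  (forall l k m, l < k -> k < m -> forall x, p k l (p m k x) = p m l x).

Definition invlim (T : nat -> finType) (p : forall m k, T m -> T k) : Type :=
  {x : forall n, T n | forall n, p n.+1 n (x n.+1) = x n}.

Definition invlim_le (T : nat -> finType) (le : forall n, T n -> T n -> Prop)
  (p : forall m k, T m -> T k) (x y : invlim p) : Prop :=
  forall n, le n (proj1_sig x n) (proj1_sig y n).

(* Continuity for the subspace topology of the product of discrete spaces:
   the basic open sets are cylinders fixing finitely many coordinates, and
   initial segments {0..M-1} of coordinates are cofinal among finite sets. *)
Definition invlim_continuous (T S : nat -> finType)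
  (p : forall m k, T m -> T k) (h : forall m k, S m -> S k)
  (f : invlim p -> invlim h) : Prop :=
  forall (x : invlim p) (N : nat), exists M : nat, forall y : invlim p,
    (forall i, i < M -> proj1_sig y i = proj1_sig x i) ->
    forall j, j < N -> proj1_sig (f y) j = proj1_sig (f x) j.

From mathcomp Require Import all_boot.
From Stdlib Require Import Classical ClassicalEpsilon.
Set Implicit Arguments. Unset Strict Implicit. Unset Printing Implicit Defensive.

(* Since P is compact and each H_n is finite, the coordinate n of f is
   uniformly continuous: it depends on a single coordinate M_n of its argument.
   Otherwise the levels where this fails form an infinite finitely branching
   tree, and a branch of it (König) is a thread at which f is not continuous.
   With i_n >= M_n strictly increasing, f_n = g_n o pi_{i_n}.  Every projection
   pi_m of an inverse limit is a quotient map (a comparable pair of level m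
   lifts level by level to comparable threads), so g_n is a quotient map
   because pi_n o f is one; compatibility of the g_n is inherited from the
   compatibility of threads. *)

Lemma dependent_choice (A : nat -> Type) (P : forall k, A k -> Prop)
    (R : forall k, A k -> A k.+1 -> Prop) (a0 : A 0) :
  P 0 a0 -> (forall k a, P k a -> exists b, P k.+1 b /\ R k a b) ->
  exists x : forall k, A k, x 0 = a0 /\ forall k, P k (x k) /\ R k (x k) (x k.+1).
Proof.
move=> P0 step.
pose B k := {a : A k | P k a}.
pose next k (b : B k) := constructive_indefinite_description _ (step k _ (svalP b)).
pose succ k (b : B k) : B k.+1 := exist _ (sval (next k b)) (proj1 (svalP (next k b))).
pose x := fix x k : B k := if k is k'.+1 then succ k' (x k') else exist _ a0 P0.
exists (fun k => sval (x k)); split=> // k.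
by split; [exact: svalP | exact: (proj2 (svalP (next k (x k))))].
Qed.

Lemma fin_common_bound (A : finType) (P : A -> nat -> Prop) :
  (forall a m m', m <= m' -> P a m -> P a m') -> (forall a, exists m, P a m) ->
  exists M, forall a, P a M.
Proof.
move=> P_mono /choice [b Pb]; exists (\max_a b a) => a.
exact: P_mono (leq_bigmax a) (Pb a).
Qed.

Lemma exists_increasing_bound (M : nat -> nat) :
  exists i : nat -> nat, {homo i : k m / k < m} /\ forall m, M m <= i m.
Proof.
exists (fun m => \sum_(0 <= k < m.+1) (M k).+1); split.
- apply: homo_ltn => [|m]; first exact: ltn_trans.
  by rewrite [in X in _ < X]big_nat_recr //= addnS ltnS leq_addr.
- by move=> m; rewrite big_nat_recr //= addnS leqW // leq_addl.
Qed.

Lemma quotient_map_comp (A B C : Type) (leA : A -> A -> Prop) (leB : B -> B -> Prop)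
    (leC : C -> C -> Prop) (phi : A -> B) (psi : B -> C) :
  quotient_map leA leB phi -> quotient_map leB leC psi ->
  quotient_map leA leC (fun a => psi (phi a)).
Proof.
move=> [phi_surj [phi_mono phi_lift]] [psi_surj [psi_mono psi_lift]]; split; [|split].
- by move=> c; have [b <-] := psi_surj c; have [a <-] := phi_surj b; exists a.
- by move=> a a' /phi_mono /psi_mono.
- move=> c c' /psi_lift [b [b' [/phi_lift [a [a' [le_aa' [<- <-]]]] [<- <-]]]].
  by exists a, a'.
Qed.

Lemma quotient_map_factor (A B C : Type) (leA : A -> A -> Prop) (leB : B -> B -> Prop)
    (leC : C -> C -> Prop) (psi : A -> B) (phi : A -> C) (g : B -> C) :
  quotient_map leA leB psi -> quotient_map leA leC phi ->
  (forall a, phi a = g (psi a)) -> quotient_map leB leC g.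
Proof.
move=> [psi_surj [psi_mono psi_lift]] [phi_surj [phi_mono phi_lift]] phiE.
split; [|split].
- by move=> c; have [a <-] := phi_surj c; exists (psi a).
- by move=> b b' /psi_lift [a [a' [le_aa' [<- <-]]]]; rewrite -!phiE; apply: phi_mono.
- move=> c c' /phi_lift [a [a' [le_aa' [<- <-]]]].
  by exists (psi a), (psi a'); rewrite !phiE; split; first exact: psi_mono.
Qed.

Section InverseLimit.

Variables (T : nat -> finType) (le : forall n, T n -> T n -> Prop)
  (p : forall m k, T m -> T k).
Arguments p : clear implicits.
Hypothesis Hsys : inverse_system le p.

Let bond_quotient : forall k m, k < m -> quotient_map (@le m) (@le k) (p m k) :=
  proj1 (proj2 (proj2 Hsys)).
Let bond_comp : forall l k m, l < k -> k < m -> forall x, p k l (p m k x) = p m l x :=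
  proj2 (proj2 (proj2 Hsys)).

Lemma thread_bond (x : invlim p) k m : k < m -> p m k (sval x m) = sval x k.
Proof.
elim: m => // m IHm; rewrite ltnS leq_eqVlt => /orP [/eqP -> | lt_km].
  exact: svalP x m.
by rewrite -(bond_comp lt_km (ltnSn m)) (svalP x m) IHm.
Qed.

Lemma thread_eq_downward (x y : invlim p) k m :
  k <= m -> sval x m = sval y m -> sval x k = sval y k.
Proof.
rewrite leq_eqVlt => /orP [/eqP -> // | lt_km] eq_m.
by rewrite -(thread_bond x lt_km) -(thread_bond y lt_km) eq_m.
Qed.

(* The tail starts at level m.+1 so that the maps p (k + m.+1) k used to fill in
   the low levels are genuine bonding maps (p m m is not required to be the
   identity). *)
Lemma thread_of_tail m (y : forall j, T (j + m.+1)) :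
  (forall j, p _ _ (y j.+1) = y j) ->
  exists x : invlim p, sval x m.+1 = y 0 /\ forall k, sval x k = p (k + m.+1) k (y k).
Proof.
move=> y_succ.
have lt_shift k : k < k + m.+1 by rewrite addnS ltnS leq_addr.
have y_bond j : p (j.+1 + m.+1) m.+1 (y j.+1) = y 0.
  elim: j => [|j IHj]; first exact: (y_succ 0).
  by rewrite -(bond_comp (k := j.+1 + m.+1)) ?y_succ // addSn ltnS leq_addl.
have x_thread k : p k.+1 k (p (k.+1 + m.+1) k.+1 (y k.+1)) = p (k + m.+1) k (y k).
  by rewrite (bond_comp (ltnSn k) (lt_shift k.+1)) -(bond_comp (lt_shift k) (ltnSn _)) y_succ.
by exists (exist _ (fun k => p (k + m.+1) k (y k)) x_thread); split; first exact: y_bond.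
Qed.

Lemma invlim_lift_le m (a b : T m) :
  le a b -> exists x y : invlim p, invlim_le le x y /\ sval x m = a /\ sval y m = b.
Proof.
have lift k := proj2 (proj2 (bond_quotient (ltnSn k))).
move=> /lift [a1 [b1 [le_ab1 [<- <-]]]].
pose A j := (T (j + m.+1) * T (j + m.+1))%type.
case: (@dependent_choice A (fun j uv => le uv.1 uv.2)
    (fun j uv uv' => p _ _ uv'.1 = uv.1 /\ p _ _ uv'.2 = uv.2) (a1, b1) le_ab1)
  => [j [u v] /lift [u' [v' le_uv']] | y [y0 yP]]; first by exists (u', v').
have [x [x_m x_k]] := thread_of_tail (fun j => proj1 (proj2 (yP j))).
have [x' [x'_m x'_k]] := thread_of_tail (fun j => proj2 (proj2 (yP j))).
exists x, x'; split; last first.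
  by rewrite -(thread_bond x (ltnSn m)) -(thread_bond x' (ltnSn m)) x_m x'_m y0.
move=> k; rewrite x_k x'_k; apply: (proj1 (proj2 (bond_quotient _))).
  by rewrite addnS ltnS leq_addr.
exact: proj1 (yP k).
Qed.

Lemma quotient_map_coord m :
  quotient_map (@invlim_le T le p) (@le m) (fun x : invlim p => sval x m).
Proof.
split; [|split].
- move=> a; have [refl _] := proj1 Hsys m.
  by have [x [_ [_ [x_m _]]]] := invlim_lift_le (refl a); exists x.
- by move=> x y; apply.
- by move=> a b /invlim_lift_le [x [y [le_xy [x_m y_m]]]]; exists x, y.
Qed.

Definition thread_through m (a : T m) : invlim p :=
  sval (constructive_indefinite_description _ (proj1 (quotient_map_coord m) a)).

Lemma thread_throughE m (a : T m) : sval (thread_through a) m = a.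
Proof. by rewrite /thread_through; case: constructive_indefinite_description. Qed.

Section UniformContinuity.

Variables (S : nat -> finType) (h : forall m k, S m -> S k) (f : invlim p -> invlim h).
Arguments h : clear implicits.
Hypothesis fcont : invlim_continuous f.
Variable n : nat.

Definition determined_on (D : invlim p -> Prop) : Prop :=
  exists M, forall x y : invlim p, D x -> sval x M = sval y M ->
    sval (f x) n = sval (f y) n.

Lemma determined_on_sub (D D' : invlim p -> Prop) :
  (forall x, D x -> D' x) -> determined_on D' -> determined_on D.
Proof. by move=> sub_DD' [M detM]; exists M => x y /sub_DD'; apply: detM. Qed.

Lemma determined_on_cover (A : finType) (D : invlim p -> Prop) (c : invlim p -> A) :
  (forall a, determined_on (fun x => D x /\ c x = a)) -> determined_on D.
Proof.
move=> /fin_common_bound [|M detM].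
  move=> a m m' le_mm' det_m x y Dx eq_m'.
  exact: det_m Dx (thread_eq_downward le_mm' eq_m').
by exists M => x y Dx; apply: (detM (c x)).
Qed.

Lemma undetermined_root :
  ~ determined_on (fun _ => True) ->
  exists a : T 0, ~ determined_on (fun x => sval x 0 = a).
Proof.
move=> undet; apply: NNPP => /not_ex_not_all det0; apply: undet.
apply: (determined_on_cover (c := fun x => sval x 0)) => a.
by apply: determined_on_sub (det0 a) => x [].
Qed.

Lemma undetermined_child k (a : T k) :
  ~ determined_on (fun x => sval x k = a) ->
  exists c : T k.+1, p k.+1 k c = a /\ ~ determined_on (fun x => sval x k.+1 = c).
Proof.
move=> undet; apply: NNPP => no_child; apply: undet.
apply: (determined_on_cover (c := fun x => sval x k.+1)) => c.
case: (classic (p k.+1 k c = a)) => [pc_a | pc_na].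
  apply: (determined_on_sub (D' := fun x => sval x k.+1 = c)) => [x [] //|].
  by apply: NNPP => undet_c; apply: no_child; exists c.
by exists 0 => x y [x_a x_c]; case: pc_na; rewrite -x_a -x_c; exact: svalP x k.
Qed.

Lemma determined_near_thread (b : invlim p) :
  exists M, determined_on (fun x => sval x M = sval b M).
Proof.
have [M contM] := fcont b n.+1.
have near_b x : sval x M = sval b M -> sval (f x) n = sval (f b) n.
  move=> x_b; apply: contM (ltnSn n) => j lt_jM.
  exact: thread_eq_downward (ltnW lt_jM) x_b.
by exists M, M => x y x_b eq_xy; rewrite !near_b // -eq_xy.
Qed.

Lemma uniformly_determined :
  exists M, forall x y : invlim p, sval x M = sval y M -> sval (f x) n = sval (f y) n.
Proof.
suff [M detM] : determined_on (fun _ => True) by exists M => x y; apply: detM.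
apply: NNPP => /undetermined_root [a0 undet0].
case: (@dependent_choice (fun k => T k) (fun k a => ~ determined_on (fun x => sval x k = a))
    (fun k a c => p k.+1 k c = a) a0 undet0) => [k a | b [_ bP]].
  by move=> /undetermined_child [c [pc undet_c]]; exists c.
have [M detM] := determined_near_thread (exist _ b (fun k => proj2 (bP k))).
exact: proj1 (bP M) detM.
Qed.

End UniformContinuity.

End InverseLimit.

Theorem mainTheorem7
  (T : nat -> finType) (leT : forall n, T n -> T n -> Prop) (p : forall m k, T m -> T k)
  (S : nat -> finType) (leS : forall n, S n -> S n -> Prop) (h : forall m k, S m -> S k)
  (HT : inverse_system leT p) (HS : inverse_system leS h)
  (f : invlim p -> invlim h)
  (fcont : invlim_continuous f)
  (fquot : quotient_map (@invlim_le T leT p) (@invlim_le S leS h) f) :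
  exists (i : nat -> nat) (g : forall j, T (i j) -> S j),
    (forall n, i n < i n.+1) /\
    (forall j, quotient_map (@leT (i j)) (@leS j) (g j)) /\
    (forall (x : invlim p) (n : nat), proj1_sig (f x) n = g n (proj1_sig x (i n))) /\
    (forall k n, k < n -> forall z : T (i n), g k (p (i n) (i k) z) = h n k (g n z)).
Proof.
have [M detM] := choice _ (uniformly_determined HT fcont).
have [i [i_incr M_le_i]] := exists_increasing_bound M.
pose g j (a : T (i j)) := sval (f (thread_through HT a)) j.
have gE x j : sval (f x) j = g j (sval x (i j)).
  apply: detM; apply: (thread_eq_downward HT (M_le_i j)).
  by rewrite thread_throughE.
exists i, g; split; first by move=> j; apply: i_incr.
split; [|split=> //].
  move=> j; apply: quotient_map_factor (quotient_map_coord HT (i j)) _ (gE^~ j).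
  exact: quotient_map_comp fquot (quotient_map_coord HS j).
move=> k n lt_kn z; rewrite -(thread_throughE HT z).
rewrite (thread_bond HT _ (i_incr _ _ lt_kn)) -!gE.
by rewrite (thread_bond HS _ lt_kn).
Qed.
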